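(* Let $\rho_{AB}$ be a state on $H_A\otimes H_B$ (finite-dimensional), and let $\rho_{BA}$ denote the same state with tensor factors ordered $B,A$. Consider $\rho_{BA}\otimes\rho_{AB}$ on $H_{B}\otimes H_{A}\otimes H_{A}\otimes H_{B}$, with the nonbilocality measure taken with respect to the two middle factors $H_A\otimes H_A$. Then $N_H^b(\rho_{BA}\otimes\rho_{AB})\ge N_H(\rho_{AB})$; in particular, $N_H(\rho_{AB})>0$ implies $N_H^b(\rho_{BA}\otimes\rho_{AB})>0$.
   Context: $\|X\|=\sqrt{\mathrm{tr}(X^\dagger X)}$ is the Hilbert–Schmidt norm. The modified measurement-induced nonlocality is $N_H(\rho_{AB})=\max_{\Pi^A}\|\sqrt{\rho_{AB}}-\Pi^A(\sqrt{\rho_{AB}})\|^2$, the maximum over von Neumann measurements $\Pi^A=\{\Pi^A_k\}$ on $H_A$ with $\sum_k\Pi^A_k\rho_A\Pi^A_k=\rho_A$, where $\Pi^A(X)=\sum_k(\Pi^A_k\otimes I^B)X(\Pi^A_k\otimes I^B)$. For a state $\sigma$ on $H_1\otimes H_2\otimes H_3\otimes H_4$ of the form $\sigma=\sigma_{12}\otimes\sigma_{34}$, the nonbilocality measure is $N_H^b(\sigma)=\max_{\Pi^{23}}\|\sqrt{\sigma}-\Pi^{23}(\sqrt\sigma)\|^2$, the maximum over von Neumann measurements $\{\Pi^{23}_h\}$ on $H_2\otimes H_3$ leaving the reduced state $\sigma_{23}$ invariant, with $\Pi^{23}(X)=\sum_h(I\otimes\Pi^{23}_h\otimes I)X(I\otimes\Pi^{23}_h\otimes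 I)$. *)

From HB Require Import structures.
From mathcomp Require Import all_boot all_algebra.
From mathcomp Require Import complex mxtens.
From mathcomp Require Import classical_sets reals.

Set Implicit Arguments.
Unset Strict Implicit.
Unset Printing Implicit Defensive.

Import GRing.Theory Num.Theory.
Local Open Scope ring_scope.

Section QuantumDefs.
Variable C : numClosedFieldType.

Definition adjmx m n (X : 'M[C]_(m, n)) : 'M[C]_(n, m) := map_mx Num.conj X^T.

Definition psdmx n (A : 'M[C]_n) : Prop :=
  adjmx A = A /\ forall v : 'rV[C]_n, 0 <= (v *m A *m adjmx v) 0 0.

Definition density n (A : 'M[C]_n) : Prop := psdmx A /\ \tr A = 1.

(* square root of a (normal, in particular positive semidefinite) matrix via the
   library spectral decomposition A = P^-1 diag(d) P, P unitary:
   sqrt A = P^-1 diag(sqrt d) P  (for psd A this is the unique psd square root) *)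
Definition sqrtmx n (A : 'M[C]_n) : 'M[C]_n :=
  invmx (spectralmx A) *m diag_mx (map_mx sqrtC (spectral_diag A)) *m spectralmx A.

Definition hs2 n (X : 'M[C]_n) : C := \tr (adjmx X *m X).

(* partial traces on H1 (x) H2 = 'I_(m * n) (lexicographic Kronecker indexing) *)
Definition ptrace2 m n (M : 'M[C]_(m * n)) : 'M[C]_m :=
  \matrix_(i, j) \sum_(k < n) M (mxtens_index (i, k)) (mxtens_index (j, k)).
Definition ptrace1 m n (M : 'M[C]_(m * n)) : 'M[C]_n :=
  \matrix_(i, j) \sum_(k < m) M (mxtens_index (k, i)) (mxtens_index (k, j)).

Definition swapmx m n (M : 'M[C]_(m * n)) : 'M[C]_(n * m) :=
  \matrix_(i, j) M (mxtens_index ((mxtens_unindex i).2, (mxtens_unindex i).1))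
                   (mxtens_index ((mxtens_unindex j).2, (mxtens_unindex j).1)).

(* A von Neumann measurement on a d-dimensional space is given by an
   orthonormal basis, i.e. the rows of a unitary matrix U; its projectors are
   Pi_k = |u_k><u_k| *)
Definition vNproj d (U : 'M[C]_d) (k : 'I_d) : 'M[C]_d :=
  adjmx (row k U) *m row k U.

Definition vN_leaves d (U : 'M[C]_d) (rho : 'M[C]_d) : Prop :=
  \sum_(k < d) vNproj U k *m rho *m vNproj U k = rho.

Definition measA dA dB (U : 'M[C]_dA) (X : 'M[C]_(dA * dB)) : 'M[C]_(dA * dB) :=
  \sum_(k < dA) (vNproj U k *t (1%:M : 'M[C]_dB)) *m X
                  *m (vNproj U k *t (1%:M : 'M[C]_dB)).

(* H1 (x) H2 (x) H3 (x) H4 represented with indices 'I_(d1 * (d2 * d3) * d4);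
   the Kronecker indexing is lexicographic, so this is the same as
   'I_(d1 * d2 * (d3 * d4)) up to the cast below. *)
Lemma dim4_assoc d1 d2 d3 d4 : (d1 * d2 * (d3 * d4) = d1 * (d2 * d3) * d4)%N.
Proof. by rewrite !mulnA. Qed.

Definition tens4 d1 d2 d3 d4 (s12 : 'M[C]_(d1 * d2)) (s34 : 'M[C]_(d3 * d4))
  : 'M[C]_(d1 * (d2 * d3) * d4) :=
  castmx (dim4_assoc d1 d2 d3 d4, dim4_assoc d1 d2 d3 d4) (s12 *t s34).

Definition red23 d1 d2 d3 d4 (S : 'M[C]_(d1 * (d2 * d3) * d4)) : 'M[C]_(d2 * d3) :=
  ptrace1 (ptrace2 S).

Definition meas23 d1 d2 d3 d4 (U : 'M[C]_(d2 * d3))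
  (X : 'M[C]_(d1 * (d2 * d3) * d4)) : 'M[C]_(d1 * (d2 * d3) * d4) :=
  \sum_(h < d2 * d3)
     (((1%:M : 'M[C]_d1) *t vNproj U h) *t (1%:M : 'M[C]_d4)) *m X
     *m (((1%:M : 'M[C]_d1) *t vNproj U h) *t (1%:M : 'M[C]_d4)).

End QuantumDefs.

Section Measures.
Variable R : realType.
Local Notation C := (R[i]).

Definition N_H dA dB (rho : 'M[C]_(dA * dB)) : R :=
  sup [set complex.Re (hs2 (sqrtmx rho - measA U (sqrtmx rho))) | U in
        [set U : 'M[C]_dA | U \is unitarymx /\ vN_leaves U (ptrace2 rho)]].

Definition N_Hb d1 d2 d3 d4 (s12 : 'M[C]_(d1 * d2)) (s34 : 'M[C]_(d3 * d4)) : R :=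
  let sigma := tens4 s12 s34 in
  sup [set complex.Re (hs2 (sqrtmx sigma - meas23 U (sqrtmx sigma))) | U in
        [set U : 'M[C]_(d2 * d3) | U \is unitarymx /\ vN_leaves U (red23 sigma)]].

End Measures.

From HB Require Import structures.
From mathcomp Require Import all_boot all_order all_algebra.
From mathcomp Require Import complex mxtens.
From mathcomp Require Import classical_sets reals.
From mathcomp Require Import ring.
Import Order.TTheory GRing.Theory Num.Theory.
Local Open Scope ring_scope.

Set Implicit Arguments.
Unset Strict Implicit.
Unset Printing Implicit Defensive.

(* Write X for the square root of rho_AB.  The state rho_BA (x) rho_AB is
   diagonalised by the tensor product of the unitaries diagonalising its two
   factors, so its square root is X_BA (x) X_AB, and the product measurement
   Pi (x) Pi on the two middle copies of H_A sends it to (Pi X)_BA (x) Pi X.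
   A von Neumann measurement is a self-adjoint idempotent for the
   Hilbert-Schmidt inner product, hence ||Y - Pi Y||^2 = ||Y||^2 - ||Pi Y||^2.
   As ||X||^2 = tr rho = 1, putting p = ||Pi X||^2 in [0, 1], the measurement Pi
   contributes 1 - p to N_H while Pi (x) Pi, which leaves rho_A (x) rho_A
   invariant whenever Pi leaves rho_A invariant, contributes 1 - p^2 >= 1 - p
   to the nonbilocality measure. *)

Section Adjoint.
Variable C : numClosedFieldType.

Lemma adjmxE m n (A : 'M[C]_(m, n)) i j : adjmx A i j = (A j i)^*.
Proof. by rewrite !mxE. Qed.

Lemma adjmxM m n p (A : 'M[C]_(m, n)) (B : 'M[C]_(n, p)) :
  adjmx (A *m B) = adjmx B *m adjmx A.
Proof. by rewrite /adjmx trmx_mul map_mxM. Qed.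

Lemma adjmxK m n (A : 'M[C]_(m, n)) : adjmx (adjmx A) = A.
Proof. exact: trmxCK. Qed.

Lemma adjmxB m n (A B : 'M[C]_(m, n)) : adjmx (A - B) = adjmx A - adjmx B.
Proof. by rewrite /adjmx linearB map_mxB. Qed.

Lemma adjmx_sum m n (I : finType) (F : I -> 'M[C]_(m, n)) :
  adjmx (\sum_i F i) = \sum_i adjmx (F i).
Proof.
apply/matrixP=> i j; rewrite adjmxE !summxE rmorph_sum.
by apply: eq_bigr=> k _; rewrite adjmxE.
Qed.

Lemma adjmx1 n : adjmx (1%:M : 'M[C]_n) = 1%:M.
Proof. by rewrite /adjmx trmx1 map_mx1. Qed.

Lemma adjmx_tens m n p q (A : 'M[C]_(m, n)) (B : 'M[C]_(p, q)) :
  adjmx (A *t B) = adjmx A *t adjmx B.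
Proof. by rewrite /adjmx trmx_tens map_mxT. Qed.

Lemma adjmx_castmx n n' (e : n = n') (A : 'M[C]_n) :
  adjmx (castmx (e, e) A) = castmx (e, e) (adjmx A).
Proof. by case: n' / e. Qed.

Lemma unitary_mulmx_adj n (U : 'M[C]_n) : U \is unitarymx -> U *m adjmx U = 1%:M.
Proof. by move/unitarymxP. Qed.

Lemma unitary_adj_mulmx n (U : 'M[C]_n) : U \is unitarymx -> adjmx U *m U = 1%:M.
Proof. by move/unitary_mulmx_adj/mulmx1C. Qed.

End Adjoint.

Section Tensor.
Variable R : pzRingType.

Lemma tens1mx1 m n : (1%:M : 'M[R]_m) *t (1%:M : 'M[R]_n) = 1%:M.
Proof.
apply/matrixP=> i j.
case: (mxtens_indexP i)=> i0 i1; case: (mxtens_indexP j)=> j0 j1.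
rewrite tensmxE !mxE -natrM (inj_eq (can_inj (@mxtens_indexK _ _))) xpair_eqE.
by case: (i0 == j0); case: (i1 == j1).
Qed.

Lemma tensmx_suml m n p q (I : finType) (F : I -> 'M[R]_(m, n)) (B : 'M[R]_(p, q)) :
  (\sum_i F i) *t B = \sum_i (F i *t B).
Proof.
apply/matrixP=> i j; rewrite !(mxE, summxE) mulr_suml.
by apply: eq_bigr=> k _; rewrite !mxE.
Qed.

Lemma tensmx_sumr m n p q (I : finType) (A : 'M[R]_(m, n)) (F : I -> 'M[R]_(p, q)) :
  A *t (\sum_i F i) = \sum_i (A *t F i).
Proof.
apply/matrixP=> i j; rewrite !(mxE, summxE) mulr_sumr.
by apply: eq_bigr=> k _; rewrite !mxE.
Qed.

Lemma mxtrace_tens m n (A : 'M[R]_m) (B : 'M[R]_n) : \tr (A *t B) = \tr A * \tr B.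
Proof. by rewrite /mxtrace mulr_sum; apply: eq_bigr=> i _; rewrite !mxE. Qed.

Lemma tensmx_diag m n (A : 'M[R]_m) (B : 'M[R]_n) :
  is_diag_mx A -> is_diag_mx B -> is_diag_mx (A *t B).
Proof.
move=> /is_diag_mxP dA /is_diag_mxP dB; apply/is_diag_mxP=> i j.
case: (mxtens_indexP i)=> i0 i1; case: (mxtens_indexP j)=> j0 j1.
rewrite tensmxE; have [<-|ne0] := eqVneq i0 j0; last by rewrite dA ?mul0r.
by have [<-|ne1] := eqVneq i1 j1; [rewrite eqxx | rewrite dB ?mulr0].
Qed.

End Tensor.

Lemma big_mxtens_index (V : nmodType) m n (F : 'I_(m * n) -> V) :
  \sum_(h < m * n) F h = \sum_(i < m) \sum_(j < n) F (mxtens_index (i, j)).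
Proof.
rewrite pair_big (reindex (@mxtens_index m n)) /=; first by apply: eq_bigr=> -[].
by exists (@mxtens_unindex m n)=> k _; rewrite (mxtens_indexK, mxtens_unindexK).
Qed.

Section SquareCast.
Variables (R : pzRingType) (n n' : nat) (e : n = n').

Lemma castmxM (A B : 'M[R]_n) :
  castmx (e, e) (A *m B) = castmx (e, e) A *m castmx (e, e) B.
Proof. by case: n' / e. Qed.

Lemma castmx_sum (I : finType) (F : I -> 'M[R]_n) :
  castmx (e, e) (\sum_i F i) = \sum_i castmx (e, e) (F i).
Proof. by case: n' / e. Qed.

Lemma castmx1 : castmx (e, e) (1%:M : 'M[R]_n) = 1%:M.
Proof. by case: n' / e. Qed.

Lemma mxtrace_castmx (A : 'M[R]_n) : \tr (castmx (e, e) A) = \tr A.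
Proof. by case: n' / e. Qed.

Lemma castmx_diag (A : 'M[R]_n) : is_diag_mx A -> is_diag_mx (castmx (e, e) A).
Proof. by case: n' / e. Qed.

End SquareCast.

Definition swap_index m n (k : 'I_(m * n)) : 'I_(n * m) :=
  mxtens_index ((mxtens_unindex k).2, (mxtens_unindex k).1).

Lemma swap_indexE m n (a : 'I_m) (b : 'I_n) :
  swap_index (mxtens_index (a, b)) = mxtens_index (b, a).
Proof. by rewrite /swap_index mxtens_indexK. Qed.

Lemma swap_indexK m n : cancel (@swap_index m n) (@swap_index n m).
Proof. by move=> k; case: (mxtens_indexP k)=> a b; rewrite !swap_indexE. Qed.

Lemma swap_index_bij m n : bijective (@swap_index m n).
Proof. by exists (@swap_index n m); apply: swap_indexK. Qed.

Section Swap.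
Variables (C : numClosedFieldType) (m n : nat).
Implicit Types A B : 'M[C]_(m * n).

Lemma swapmxE A i j : swapmx A i j = A (swap_index i) (swap_index j).
Proof. by rewrite mxE. Qed.

Lemma swapmxM A B : swapmx (A *m B) = swapmx A *m swapmx B.
Proof.
apply/matrixP=> i j; rewrite swapmxE !mxE.
rewrite (reindex (@swap_index n m)) /=; last exact/onW_bij/swap_index_bij.
by apply: eq_bigr=> k _; rewrite !swapmxE.
Qed.

Lemma swapmx_adj A : swapmx (adjmx A) = adjmx (swapmx A).
Proof. by apply/matrixP=> i j; rewrite swapmxE !adjmxE swapmxE. Qed.

Lemma swapmx_sum (I : finType) (F : I -> 'M[C]_(m * n)) :
  swapmx (\sum_i F i) = \sum_i swapmx (F i).
Proof.
apply/matrixP=> i j; rewrite swapmxE !summxE.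
by apply: eq_bigr=> k _; rewrite swapmxE.
Qed.

Lemma swapmx1 : swapmx (1%:M : 'M[C]_(m * n)) = 1%:M.
Proof.
apply/matrixP=> i j; rewrite swapmxE !mxE.
by rewrite (inj_eq (can_inj (@swap_indexK n m))).
Qed.

Lemma swapmx_tens (A : 'M[C]_m) (B : 'M[C]_n) : swapmx (A *t B) = B *t A.
Proof.
apply/matrixP=> i j.
case: (mxtens_indexP i)=> i0 i1; case: (mxtens_indexP j)=> j0 j1.
by rewrite swapmxE !swap_indexE !tensmxE mulrC.
Qed.

Lemma mxtrace_swapmx A : \tr (swapmx A) = \tr A.
Proof.
rewrite /mxtrace (reindex (@swap_index m n)) /=; last exact/onW_bij/swap_index_bij.
by apply: eq_bigr=> k _; rewrite swapmxE swap_indexK.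
Qed.

Lemma hs2_swapmx A : hs2 (swapmx A) = hs2 A.
Proof. by rewrite /hs2 -swapmx_adj -swapmxM mxtrace_swapmx. Qed.

Lemma ptrace1_swapmx A : ptrace1 (swapmx A) = ptrace2 A.
Proof.
apply/matrixP=> i j; rewrite !mxE; apply: eq_bigr=> k _.
by rewrite swapmxE !swap_indexE.
Qed.

Lemma map_swapmx (f : C -> C) A : map_mx f (swapmx A) = swapmx (map_mx f A).
Proof. by apply/matrixP=> i j; rewrite swapmxE !mxE. Qed.

Lemma swapmx_diag A : is_diag_mx A -> is_diag_mx (swapmx A).
Proof.
move=> /is_diag_mxP dA; apply/is_diag_mxP=> i j ij; rewrite swapmxE dA //.
by apply: contra ij=> /eqP/val_inj/(can_inj (@swap_indexK _ _))->.
Qed.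

End Swap.

Lemma tens4_index d1 d2 d3 d4 (k : 'I_d1) (a : 'I_d2) (b : 'I_d3) (l : 'I_d4) :
  cast_ord (esym (dim4_assoc d1 d2 d3 d4))
    (mxtens_index (mxtens_index (k, mxtens_index (a, b)), l)) =
  mxtens_index (mxtens_index (k, a), mxtens_index (b, l)).
Proof. by apply: val_inj; rewrite /= !mulnDl !mulnA !addnA. Qed.

Section Tens4.
Variables (C : numClosedFieldType) (d1 d2 d3 d4 : nat).
Implicit Types (A B : 'M[C]_(d1 * d2)) (S T : 'M[C]_(d3 * d4)).

Lemma tens4E A S k a b l k' a' b' l' :
  tens4 A S (mxtens_index (mxtens_index (k, mxtens_index (a, b)), l))
             (mxtens_index (mxtens_index (k', mxtens_index (a', b')), l')) =
  A (mxtens_index (k, a)) (mxtens_index (k', a')) *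
  S (mxtens_index (b, l)) (mxtens_index (b', l')).
Proof. by rewrite castmxE !tens4_index tensmxE. Qed.

Lemma tens4M A B S T : tens4 (A *m B) (S *m T) = tens4 A S *m tens4 B T.
Proof. by rewrite /tens4 -tensmx_mul castmxM. Qed.

Lemma tens4_adj A S : adjmx (tens4 A S) = tens4 (adjmx A) (adjmx S).
Proof. by rewrite /tens4 adjmx_castmx adjmx_tens. Qed.

Lemma mxtrace_tens4 A S : \tr (tens4 A S) = \tr A * \tr S.
Proof. by rewrite /tens4 mxtrace_castmx mxtrace_tens. Qed.

Lemma hs2_tens4 A S : hs2 (tens4 A S) = hs2 A * hs2 S.
Proof. by rewrite /hs2 tens4_adj -tens4M mxtrace_tens4. Qed.

Lemma tens4_sum (I J : finType) (F : I -> 'M[C]_(d1 * d2)) (G : J -> 'M[C]_(d3 * d4)) :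
  tens4 (\sum_i F i) (\sum_j G j) = \sum_i \sum_j tens4 (F i) (G j).
Proof.
rewrite /tens4 tensmx_suml castmx_sum; apply: eq_bigr=> i _.
by rewrite tensmx_sumr castmx_sum.
Qed.

Lemma tens4_1 : tens4 (1%:M : 'M[C]_(d1 * d2)) (1%:M : 'M[C]_(d3 * d4)) = 1%:M.
Proof. by rewrite /tens4 tens1mx1 castmx1. Qed.

Lemma tens4_diag A S : is_diag_mx A -> is_diag_mx S -> is_diag_mx (tens4 A S).
Proof. by move=> dA dS; apply/castmx_diag/tensmx_diag. Qed.

Lemma map_sqrtC_tens4 A S : (forall i j, 0 <= A i j) -> (forall i j, 0 <= S i j) ->
  map_mx sqrtC (tens4 A S) = tens4 (map_mx sqrtC A) (map_mx sqrtC S).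
Proof.
move=> A_ge0 S_ge0; rewrite /tens4 map_castmx; congr castmx.
apply/matrixP=> i j.
case: (mxtens_indexP i)=> i0 i1; case: (mxtens_indexP j)=> j0 j1.
by rewrite mxE !tensmxE !mxE sqrtCM ?nnegrE.
Qed.

Lemma red23_tens4 A S : red23 (tens4 A S) = ptrace1 A *t ptrace2 S.
Proof.
apply/matrixP=> i j.
case: (mxtens_indexP i)=> a b; case: (mxtens_indexP j)=> a' b'.
rewrite tensmxE !mxE mulr_suml; apply: eq_bigr=> k _.
rewrite !mxE mulr_sumr; apply: eq_bigr=> l _.
by rewrite tens4E.
Qed.

Lemma tens4_middle (P : 'M[C]_d2) (Q : 'M[C]_d3) :
  ((1%:M : 'M[C]_d1) *t (P *t Q)) *t (1%:M : 'M[C]_d4) =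
  tens4 ((1%:M : 'M[C]_d1) *t P) (Q *t (1%:M : 'M[C]_d4)).
Proof.
apply/matrixP=> i j.
case: (mxtens_indexP i)=> i0 l; case: (mxtens_indexP i0)=> k a.
case: (mxtens_indexP a)=> a1 a2.
case: (mxtens_indexP j)=> j0 l'; case: (mxtens_indexP j0)=> k' b.
case: (mxtens_indexP b)=> b1 b2.
by rewrite tens4E !tensmxE !mxE mulrA mulrA [_ * P _ _]mulrC -!mulrA.
Qed.

End Tens4.

Definition hsdot (C : numClosedFieldType) n (A B : 'M[C]_n) : C := \tr (adjmx A *m B).

Lemma hs2B (C : numClosedFieldType) n (A B : 'M[C]_n) :
  hs2 (A - B) = hs2 A - hsdot A B - hsdot B A + hs2 B.
Proof. by rewrite /hs2 /hsdot adjmxB mulmxBl !mulmxBr !raddfB /= opprK addrA. Qed.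

Lemma hs2_ge0 (C : numClosedFieldType) n (A : 'M[C]_n) : 0 <= hs2 A.
Proof.
apply: sumr_ge0=> i _; rewrite mxE; apply: sumr_ge0=> k _.
by rewrite adjmxE mulrC mul_conjC_ge0.
Qed.

Section Pinching.
Variables (C : numClosedFieldType) (n K : nat) (Q : 'I_K -> 'M[C]_n).
Hypothesis Q_adj : forall h, adjmx (Q h) = Q h.
Hypothesis Q_orth : forall h k, Q h *m Q k = if h == k then Q h else 0.

Definition pinch (Y : 'M[C]_n) : 'M[C]_n := \sum_h Q h *m Y *m Q h.

Lemma adjmx_pinch Y : adjmx (pinch Y) = pinch (adjmx Y).
Proof. by rewrite adjmx_sum; apply: eq_bigr=> h _; rewrite !adjmxM Q_adj mulmxA. Qed.

Lemma mul_pinch h Y : Q h *m pinch Y = Q h *m Y *m Q h.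
Proof.
rewrite mulmx_sumr (bigD1 h) //= big1 ?addr0 => [|k /negPf hk].
  by rewrite !mulmxA Q_orth eqxx.
by rewrite !mulmxA Q_orth eq_sym hk !mul0mx.
Qed.

Lemma pinch_id Y : pinch (pinch Y) = pinch Y.
Proof. by apply: eq_bigr=> h _; rewrite mul_pinch -mulmxA Q_orth eqxx. Qed.

Lemma hsdot_pinch Y Z : hsdot (pinch Y) Z = hsdot Y (pinch Z).
Proof.
rewrite /hsdot adjmx_pinch mulmx_suml mulmx_sumr !raddf_sum /=.
by apply: eq_bigr=> h _; rewrite -!mulmxA mxtrace_mulC !mulmxA.
Qed.

Lemma hs2_sub_pinch Y : hs2 (Y - pinch Y) = hs2 Y - hs2 (pinch Y).
Proof.
have hsdotYP : hsdot Y (pinch Y) = hs2 (pinch Y).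
  by rewrite /hs2 -/(hsdot _ _) hsdot_pinch pinch_id.
by rewrite hs2B hsdot_pinch hsdotYP subrK.
Qed.

End Pinching.

Section VonNeumann.
Variables (C : numClosedFieldType) (d : nat) (U : 'M[C]_d).

Lemma vNprojE k a b : vNproj U k a b = (U k a)^* * U k b.
Proof. by rewrite mxE big_ord1 adjmxE !mxE. Qed.

Lemma vNproj_adj k : adjmx (vNproj U k) = vNproj U k.
Proof. by rewrite /vNproj adjmxM adjmxK. Qed.

Lemma vNproj_orth h k : U \is unitarymx ->
  vNproj U h *m vNproj U k = if h == k then vNproj U h else 0.
Proof.
move=> /unitarymxP UU.
have rowsU : row h U *m adjmx (row k U) = ((U *m adjmx U) h k)%:M.
  apply/matrixP=> i j; rewrite !ord1 [RHS]mxE eqxx mulr1n !mxE.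
  by apply: eq_bigr=> l _; rewrite !mxE.
rewrite /vNproj mulmxA -[_ *m row h U *m _]mulmxA rowsU UU mxE.
case: eqP=> [<-|_]; first by rewrite mulr1n mulmx1.
by rewrite mulr0n raddf0 mulmx0 mul0mx.
Qed.

End VonNeumann.

Section Measurements.
Variable C : numClosedFieldType.

Lemma hs2_sub_measA dA dB (U : 'M[C]_dA) (X : 'M[C]_(dA * dB)) : U \is unitarymx ->
  hs2 (X - measA U X) = hs2 X - hs2 (measA U X).
Proof.
move=> Uu; apply: (hs2_sub_pinch (Q := fun k => vNproj U k *t 1%:M)) => [h|h k].
  by rewrite adjmx_tens adjmx1 vNproj_adj.
by rewrite tensmx_mul vNproj_orth // mulmx1; case: eqP=> // _; rewrite tens0mx.
Qed.

Lemma hs2_sub_meas23 d1 d2 d3 d4 (U : 'M[C]_(d2 * d3)) (X : 'M[C]_(d1 * (d2 * d3) * d4)) :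
  U \is unitarymx -> hs2 (X - meas23 U X) = hs2 X - hs2 (meas23 U X).
Proof.
move=> Uu; apply: (hs2_sub_pinch (Q := fun k => 1%:M *t vNproj U k *t 1%:M)) => [h|h k].
  by rewrite !adjmx_tens !adjmx1 vNproj_adj.
rewrite !tensmx_mul vNproj_orth // !mulmx1.
by case: eqP=> // _; rewrite tensmx0 tens0mx.
Qed.

Lemma vNproj_tens m n (U : 'M[C]_m) (V : 'M[C]_n) i j :
  vNproj (U *t V) (mxtens_index (i, j)) = vNproj U i *t vNproj V j.
Proof.
apply/matrixP=> a b.
case: (mxtens_indexP a)=> a1 a2; case: (mxtens_indexP b)=> b1 b2.
by rewrite vNprojE !tensmxE !vNprojE rmorphM mulrACA.
Qed.

Lemma unitarymx_tens m n (U : 'M[C]_m) (V : 'M[C]_n) :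
  U \is unitarymx -> V \is unitarymx -> U *t V \is unitarymx.
Proof.
move=> /unitarymxP UU /unitarymxP VV; apply/unitarymxP.
by rewrite -/(adjmx _) adjmx_tens tensmx_mul UU VV tens1mx1.
Qed.

Lemma vN_leaves_tens m n (U : 'M[C]_m) (V : 'M[C]_n) (A : 'M[C]_m) (B : 'M[C]_n) :
  vN_leaves U A -> vN_leaves V B -> vN_leaves (U *t V) (A *t B).
Proof.
rewrite /vN_leaves => UA VB.
rewrite big_mxtens_index -[in RHS]UA -[in RHS]VB tensmx_suml.
apply: eq_bigr=> i _; rewrite tensmx_sumr; apply: eq_bigr=> j _.
by rewrite vNproj_tens !tensmx_mul.
Qed.

End Measurements.

Section SquareRoot.
Variables (C : numClosedFieldType) (n : nat).
Implicit Types (M P Q W : 'M[C]_n) (d e : 'rV[C]_n).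

Lemma diag_map_mx (f : C -> C) d :
  f 0 = 0 -> map_mx f (diag_mx d) = diag_mx (map_mx f d).
Proof.
by move=> f0; apply/matrixP=> i j; rewrite !mxE; case: eqP; rewrite ?mulr1n ?mulr0n.
Qed.

Lemma diag_mx_intertwine_map (f : C -> C) W d e :
  W *m diag_mx d = diag_mx e *m W ->
  W *m diag_mx (map_mx f d) = diag_mx (map_mx f e) *m W.
Proof.
move=> /matrixP Wde; apply/matrixP=> i j; move: (Wde i j).
rewrite !mul_mx_diag !mul_diag_mx !mxE.
have [->|Wij] := eqVneq (W i j) 0; first by rewrite !mul0r !mulr0.
by rewrite mulrC => /(mulIf Wij) ->; rewrite mulrC.
Qed.

Lemma unitary_diag_conj_map (f : C -> C) P Q d e :
  P \is unitarymx -> Q \is unitarymx ->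
  adjmx P *m diag_mx d *m P = adjmx Q *m diag_mx e *m Q ->
  adjmx P *m diag_mx (map_mx f d) *m P = adjmx Q *m diag_mx (map_mx f e) *m Q.
Proof.
move=> Pu Qu PdQe; set W := Q *m adjmx P.
have /(diag_mx_intertwine_map f) Wfde : W *m diag_mx d = diag_mx e *m W.
  have := congr1 (fun M => Q *m M *m adjmx P) PdQe.
  rewrite !mulmxA (unitary_mulmx_adj Qu) mul1mx -(mulmxA _ P) (unitary_mulmx_adj Pu).
  by rewrite mulmx1.
have -> : adjmx Q *m diag_mx (map_mx f e) *m Q =
          adjmx Q *m (diag_mx (map_mx f e) *m W) *m P.
  by rewrite /W -!mulmxA (unitary_adj_mulmx Pu) mulmx1.
by rewrite -Wfde /W !mulmxA (unitary_adj_mulmx Qu) mul1mx.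
Qed.

Lemma sqrtmx_unitary_diag M W e : W \is unitarymx ->
  M = adjmx W *m diag_mx e *m W -> sqrtmx M = adjmx W *m diag_mx (map_mx sqrtC e) *m W.
Proof.
move=> Wu defM; have Pu := spectral_unitarymx M.
have /orthomx_spectralP : M \is normalmx.
  by apply/orthomx_spectral_subproof; exists (W, e); rewrite //= invmx_unitary.
rewrite /sqrtmx !invmx_unitary // => defM'.
by apply: unitary_diag_conj_map => //; rewrite -defM -defM'.
Qed.

Lemma psdmx_spectral M : psdmx M ->
  M = adjmx (spectralmx M) *m diag_mx (spectral_diag M) *m spectralmx M /\
  forall i, 0 <= spectral_diag M 0 i.
Proof.
move=> [Madj M_ge0]; set P := spectralmx M; set d := spectral_diag M.
have /unitary_mulmx_adj PP : P \is unitarymx := spectral_unitarymx M.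
have defM : M = adjmx P *m diag_mx d *m P.
  have /orthomx_spectralP : M \is normalmx by apply/normalmxP; rewrite -/(adjmx M) Madj.
  by rewrite invmx_unitary ?spectral_unitarymx.
split=> // i; have := M_ge0 (row i P).
have -> : (row i P *m M *m adjmx (row i P)) 0 0 = (P *m M *m adjmx P) i i.
  by rewrite -row_mul !mxE; apply: eq_bigr=> k _; rewrite !mxE.
by rewrite defM !mulmxA PP mul1mx -mulmxA PP mulmx1 mxE eqxx mulr1n.
Qed.

Lemma sqrtmxE M : sqrtmx M =
  adjmx (spectralmx M) *m diag_mx (map_mx sqrtC (spectral_diag M)) *m spectralmx M.
Proof. by rewrite /sqrtmx invmx_unitary ?spectral_unitarymx. Qed.

Lemma sqrtmx_adj M : psdmx M -> adjmx (sqrtmx M) = sqrtmx M.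
Proof.
case/psdmx_spectral=> _ d_ge0.
rewrite sqrtmxE !adjmxM adjmxK mulmxA /adjmx tr_diag_mx map_diag_mx.
congr (_ *m diag_mx _ *m _); apply/rowP=> i; rewrite !mxE.
by apply: geC0_conj; rewrite sqrtC_ge0.
Qed.

Lemma sqrtmx_sqr M : psdmx M -> sqrtmx M *m sqrtmx M = M.
Proof.
case/psdmx_spectral=> defM _; rewrite sqrtmxE [RHS]defM.
have /unitary_mulmx_adj PP := spectral_unitarymx M.
rewrite !mulmxA -[_ *m spectralmx M *m _]mulmxA PP mulmx1.
rewrite -[adjmx _ *m _ *m diag_mx _]mulmxA mulmx_diag.
by congr (_ *m diag_mx _ *m _); apply/rowP=> i; rewrite !mxE -expr2 sqrtCK.
Qed.

Lemma hs2_sqrtmx M : psdmx M -> hs2 (sqrtmx M) = \tr M.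
Proof. by move=> Mpsd; rewrite /hs2 sqrtmx_adj ?sqrtmx_sqr. Qed.

End SquareRoot.

Section Twin.
Variables (C : numClosedFieldType) (m n : nat).
Implicit Types M N P X : 'M[C]_(m * n).

Definition twin M : 'M[C]_(n * (m * m) * n) := tens4 (swapmx M) M.

Lemma twinM M N : twin (M *m N) = twin M *m twin N.
Proof. by rewrite /twin swapmxM tens4M. Qed.

Lemma twin_adj M : adjmx (twin M) = twin (adjmx M).
Proof. by rewrite /twin tens4_adj swapmx_adj. Qed.

Lemma twin_conj P M : twin (adjmx P *m M *m P) = adjmx (twin P) *m twin M *m twin P.
Proof. by rewrite !twinM twin_adj. Qed.

Lemma unitarymx_twin P : P \is unitarymx -> twin P \is unitarymx.
Proof.
move=> /unitary_mulmx_adj PP; apply/unitarymxP.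
by rewrite -/(adjmx _) twin_adj -twinM PP /twin swapmx1 tens4_1.
Qed.

Lemma hs2_twin M : hs2 (twin M) = hs2 M ^+ 2.
Proof. by rewrite hs2_tens4 hs2_swapmx. Qed.

Lemma red23_twin M : red23 (twin M) = ptrace2 M *t ptrace2 M.
Proof. by rewrite red23_tens4 ptrace1_swapmx. Qed.

Lemma meas23_twin (U : 'M[C]_m) X : meas23 (U *t U) (twin X) = twin (measA U X).
Proof.
rewrite /meas23 /twin /measA swapmx_sum tens4_sum big_mxtens_index.
apply: eq_bigr=> i _; apply: eq_bigr=> j _.
by rewrite vNproj_tens tens4_middle -!tens4M !swapmxM swapmx_tens.
Qed.

Lemma sqrtmx_twin M : psdmx M -> sqrtmx (twin M) = twin (sqrtmx M).
Proof.
case/psdmx_spectral; set P := spectralmx M; set d := spectral_diag M => defM d_ge0.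
have Pu : P \is unitarymx := spectral_unitarymx M.
have D_ge0 i j : 0 <= diag_mx d i j.
  by rewrite mxE; case: eqP; rewrite ?mulr1n ?mulr0n.
have /diag_mxP [e defE] : is_diag_mx (twin (diag_mx d)).
  by apply: tens4_diag; [apply: swapmx_diag|]; apply: diag_mx_is_diag.
rewrite (@sqrtmx_unitary_diag _ _ _ (twin P) e) ?unitarymx_twin //; last first.
  by rewrite -defE -twin_conj -defM.
rewrite -diag_map_mx ?sqrtC0 // -defE /twin map_sqrtC_tens4 //; last first.
  by move=> i j; rewrite swapmxE.
by rewrite map_swapmx diag_map_mx ?sqrtC0 // -/(twin _) -twin_conj sqrtmxE.
Qed.

End Twin.

Lemma hs2_sub_measA_le_twin (C : numClosedFieldType) dA dB (U : 'M[C]_dA)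
    (X : 'M[C]_(dA * dB)) :
  U \is unitarymx -> hs2 X = 1 ->
  hs2 (X - measA U X) <= hs2 (twin X - meas23 (U *t U) (twin X)).
Proof.
move=> Uu X1; have UUu := unitarymx_tens Uu Uu.
rewrite hs2_sub_meas23 // meas23_twin !hs2_twin hs2_sub_measA // X1.
set p := hs2 (measA U X); have p_ge0 : 0 <= p := hs2_ge0 _.
have p_le1 : 0 <= 1 - p by rewrite -X1 -hs2_sub_measA ?hs2_ge0.
have -> : 1 ^+ 2 - p ^+ 2 = 1 - p + p * (1 - p) by ring.
by rewrite lerDl mulr_ge0.
Qed.

Lemma ler_Re (R : rcfType) (x y : R[i]) : x <= y -> complex.Re x <= complex.Re y.
Proof. by rewrite lecE => /andP[]. Qed.

(* Since [sup set0 = 0], an empty [A] is only dominated when [B] is nonnegative. *)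
Lemma sup_le_ge0 (R : realType) (A B : set R) :
  has_ubound B -> (forall y, B y -> 0 <= y) -> (A `<=` down B)%classic -> sup A <= sup B.
Proof.
move=> ubB B_ge0 AB; have [A0|/set0P [x Ax]] := eqVneq A set0.
  rewrite A0 sup0; have [->|/set0P [y By]] := eqVneq B set0; first by rewrite sup0.
  exact: le_trans (B_ge0 y By) (ub_le_sup ubB By).
apply: (sup_le AB); first by exists x.
by split=> //; case: (AB x Ax) => y [By _]; exists y.
Qed.

Theorem mainTheorem3 (R : realType) (dA dB : nat) (rho : 'M[R[i]]_(dA * dB)) :
  density rho ->
  N_H rho <= N_Hb (swapmx rho) rho /\ (0 < N_H rho -> 0 < N_Hb (swapmx rho) rho).
Proof.
move=> [rho_psd tr_rho]; set X := sqrtmx rho.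
have X1 : hs2 X = 1 by rewrite hs2_sqrtmx.
have N_H_le : N_H rho <= N_Hb (swapmx rho) rho.
  rewrite /N_H /N_Hb /= -/(twin rho) sqrtmx_twin // -/X.
  apply: sup_le_ge0 => [|_ [U _ <-]|_ [U [Uu U_rhoA] <-]]; last first.
  - exists (complex.Re (hs2 (twin X - meas23 (U *t U) (twin X)))).
    split; last exact/ler_Re/hs2_sub_measA_le_twin.
    exists (U *t U) => //; split; first exact: unitarymx_tens.
    by rewrite red23_twin; apply: vN_leaves_tens.
  - exact: ler_Re (hs2_ge0 _).
  exists (complex.Re (hs2 (twin X))) => _ [U [Uu _] <-]; apply: ler_Re.
  by rewrite hs2_sub_meas23 // lerBlDr lerDl hs2_ge0.
by split=> // NH_gt0; apply: lt_le_trans N_H_le.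
Qed.
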